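(* Suppose $p\in[1,2)$, $\rho>0$ and $\mathbb{P}_\circ\in\mathscr{Q}_p$. Then $\varphi(X)=+\infty$ for every $X\in\mathcal{O}^{d,r}$.
   Context: Let $d,r$ be integers with $1\le r<d$ and $\mathcal{O}^{d,r}=\{X\in\mathbb{R}^{d\times r}: X^\top X=I_r\}$. For $p\ge 1$, $\mathscr{Q}_p$ denotes the set of Borel probability distributions $\mathbb{P}$ on $\mathbb{R}^d$ with $\mathbb{E}_{\mathbb{P}}\|\xi\|^p<\infty$. For $\mathbb{P}_1,\mathbb{P}_2\in\mathscr{Q}_p$ the type-$p$ Wasserstein distance is $\mathbb{W}_p(\mathbb{P}_1,\mathbb{P}_2)=\inf_{\mathbb{Q}\in\mathscr{J}(\mathbb{P}_1,\mathbb{P}_2)}\big(\mathbb{E}_{(\xi_1,\xi_2)\sim\mathbb{Q}}\|\xi_1-\xi_2\|_p^p\big)^{1/p}$, where $\mathscr{J}(\mathbb{P}_1,\mathbb{P}_2)$ is the set of joint distributions with marginals $\mathbb{P}_1,\mathbb{P}_2$ and $\|\cdot\|_p$ is the $\ell_p$ norm on $\mathbb{R}^d$. For $X\in\mathcal{O}^{d,r}$, $\varphi(X)=\sup\{\mathbb{E}_{\mathbb{P}}\big[\|(I_d-XX^\top)(\xi-\mathbb{E}_{\mathbb{P}}[\xi])\|_2^2\big]:\mathbb{P}\in\mathscr{Q}_p,\ \mathbb{W}_p(\mathbb{P},\mathbb{P}_\circ)\le\rho\}$. *)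

(* R^d is modelled as [d.-tuple R] with the product
   (coordinate) sigma-algebra provided by mathcomp-analysis. *)
From HB Require Import structures.
From mathcomp Require Import all_boot all_order all_algebra.
From mathcomp Require Import all_classical all_reals all_analysis.
Set Implicit Arguments. Unset Strict Implicit. Unset Printing Implicit Defensive.
Import Order.TTheory GRing.Theory Num.Theory.
Local Open Scope classical_set_scope.
Local Open Scope ring_scope.

Section DRPCA.
Variable R : realType.

Definition Rd (d : nat) := d.-tuple R.

Definition lp_pow (d : nat) (p : R) (x : Rd d) : R :=
  \sum_(i < d) `|tnth x i| `^ p.

Definition in_Qp (d : nat) (p : R) (P : probability (Rd d) R) : Prop :=
  (\int[P]_x (lp_pow p x)%:E < +oo)%E.

Definition is_coupling (d : nat) (P1 P2 : probability (Rd d) R)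
    (Q : probability (Rd d * Rd d)%type R) : Prop :=
  forall A : set (Rd d), measurable A ->
    Q (A `*` setT) = P1 A /\ Q (setT `*` A) = P2 A.

Definition Wasserstein (d : nat) (p : R) (P1 P2 : probability (Rd d) R) : \bar R :=
  ((ereal_inf [set c | exists Q : probability (Rd d * Rd d)%type R,
       is_coupling P1 P2 Q /\
       c = \int[Q]_z (lp_pow p ([tuple tnth z.1 i - tnth z.2 i | i < d] : Rd d)
                      )%:E ]) `^ p^-1)%E.

Definition mean (d : nat) (P : probability (Rd d) R) : 'cV[R]_d :=
  \col_i fine (\int[P]_x (tnth x i)%:E).

Definition cvec (d : nat) (x : Rd d) : 'cV[R]_d := \col_i tnth x i.

Definition sqnorm2 (d : nat) (v : 'cV[R]_d) : R := \sum_(i < d) (v i 0) ^+ 2.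

Definition pca_obj (d r : nat) (X : 'M[R]_(d, r)) (P : probability (Rd d) R) : \bar R :=
  \int[P]_x (sqnorm2 ((1%:M - X *m X^T) *m (cvec x - mean P)))%:E.

Definition varphi (d r : nat) (p rho : R) (P0 : probability (Rd d) R)
    (X : 'M[R]_(d, r)) : \bar R :=
  ereal_sup [set v | exists P : probability (Rd d) R,
     [/\ in_Qp p P, (Wasserstein p P P0 <= rho%:E)%E & v = pca_obj X P]].

End DRPCA.

From HB Require Import structures.
From mathcomp Require Import all_boot all_order all_algebra.
From mathcomp Require Import all_classical all_reals all_analysis.
From mathcomp Require Import measurable_realfun ring lra.
Import Order.TTheory GRing.Theory Num.Theory.
Local Open Scope classical_set_scope.
Local Open Scope ring_scope.
Set Implicit Arguments. Unset Strict Implicit.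

(* Move a fraction [e] of the mass of [P0] by [t e_j], where column [j] of
   [I - X X^T] is nonzero (it exists because [rank (X X^T) <= r < d]).  The
   coupling moving exactly this mass costs [e t^p], so for [e = rho^p / t^p] the
   new law stays in the Wasserstein ball, while its residual variance is at least
   [e t^2 |(I - X X^T) e_j|^2 / 2 = rho^p t^(2-p) |(I - X X^T) e_j|^2 / 2],
   which is unbounded in [t] because [p < 2]. *)

Section push_mixture.
Local Open Scope ereal_scope.
Context d d' (T : measurableType d) (T' : measurableType d') (R : realType).
Variables (P : probability T R) (f g : T -> T') (e : R).
Hypotheses (mf : measurable_fun setT f) (mg : measurable_fun setT g)
  (e0 : (0 <= e)%R) (e1 : (e <= 1)%R).

Let F : {mfun T >-> T'} := HB.pack f (isMeasurableFun.Build _ _ _ _ _ mf).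
Let G : {mfun T >-> T'} := HB.pack g (isMeasurableFun.Build _ _ _ _ _ mg).
Let e1' : (0 <= 1 - e)%R. Proof. by rewrite subr_ge0. Qed.

Definition push_mixture :=
  measure_add (mscale (NngNum e1') (distribution P F)) (mscale (NngNum e0) (distribution P G)).
HB.instance Definition _ := Measure.copy push_mixture
  (measure_add (mscale (NngNum e1') (distribution P F)) (mscale (NngNum e0) (distribution P G))).

Lemma push_mixtureE A :
  push_mixture A = (1 - e)%:E * P (f @^-1` A) + e%:E * P (g @^-1` A).
Proof. by rewrite /push_mixture measure_addE. Qed.

Let push_mixture_setT : push_mixture setT = 1.
Proof.
by rewrite push_mixtureE !preimage_setT !probability_setT !mule1 -EFinD subrK.
Qed.
HB.instance Definition _ :=
  Measure_isProbability.Build _ _ _ push_mixture push_mixture_setT.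

Lemma ge0_integral_push_mixture (h : T' -> \bar R) :
  measurable_fun setT h -> (forall x, 0 <= h x) ->
  \int[push_mixture]_x h x
  = (1 - e)%:E * \int[P]_x h (f x) + e%:E * \int[P]_x h (g x).
Proof.
move=> mh h0; rewrite (ge0_integral_measure_add _ _ measurableT (fun x _ => h0 x) mh).
by rewrite !ge0_integral_mscale// !ge0_integral_distribution.
Qed.
End push_mixture.

Section tuple_space.
Context (R : realType) (d : nat).
Implicit Types (x v : Rd R d) (p t : R).

Definition tshift v x : Rd R d := [tuple tnth x i + tnth v i | i < d].
Definition tdelta (j : 'I_d) t : Rd R d := [tuple t * (i == j)%:R | i < d].

Lemma measurable_tshift v : measurable_fun setT (tshift v).
Proof.
apply/(@measurable_fun_tnthP _ _ (Rd R d) R d) => i.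
rewrite (_ : _ \o _ = fun x : Rd R d => tnth x i + tnth v i); last first.
  by apply/funext => x /=; rewrite tnth_mktuple.
exact: measurable_funD (measurable_tnth i) (measurable_cst _).
Qed.

Lemma measurable_lp_pow p : measurable_fun setT (@lp_pow R d p).
Proof.
apply: measurable_sum => i; apply: measurableT_comp (measurable_powR p) _.
exact: measurableT_comp (@normr_measurable R setT) (measurable_tnth i).
Qed.

Lemma measurable_lp_pow_diff p : measurable_fun setT
  (fun z : Rd R d * Rd R d => lp_pow p ([tuple tnth z.1 i - tnth z.2 i | i < d] : Rd R d)).
Proof.
rewrite (_ : (fun z => _) = fun z : Rd R d * Rd R d =>
    \sum_(i < d) `|tnth z.1 i - tnth z.2 i| `^ p); last first.
  by apply/funext => z; apply: eq_bigr => i _; rewrite tnth_mktuple.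
apply: measurable_sum => i; apply: measurableT_comp (measurable_powR p) _.
apply: measurableT_comp (@normr_measurable R setT) _.
by apply: measurable_funB; apply: measurableT_comp (measurable_tnth i) _.
Qed.

Lemma measurable_sqnorm2_affine (M : 'M[R]_d) (m : 'cV[R]_d) :
  measurable_fun setT (fun x : Rd R d => sqnorm2 (M *m (cvec x - m))).
Proof.
rewrite (_ : (fun x => _) = fun x : Rd R d =>
    \sum_(i < d) (\sum_(k < d) M i k * (tnth x k - m k 0)) ^+ 2); last first.
  apply/funext => x; apply: eq_bigr => i _; rewrite mxE; congr (_ ^+ 2).
  by apply: eq_bigr => k _; rewrite !mxE.
apply: measurable_sum => i; apply: measurable_funX; apply: measurable_sum => k.
exact: measurable_funM (measurable_cst _) (measurable_funB (measurable_tnth k) (measurable_cst _)).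
Qed.

Lemma lp_pow_ge0 p x : 0 <= lp_pow p x.
Proof. by apply: sumr_ge0 => i _; exact: powR_ge0. Qed.

Lemma powR_normD_le (a b p : R) : 0 <= p ->
  `|a + b| `^ p <= 2 `^ p * (`|a| `^ p + `|b| `^ p).
Proof.
move=> p0.
have ab_le : `|a + b| <= 2 * Num.max `|a| `|b|.
  rewrite (le_trans (ler_normD _ _))// mulr2n mulrDl mul1r.
  by apply: lerD; rewrite le_max lexx ?orbT.
rewrite (le_trans (ge0_ler_powR p0 _ _ ab_le)) ?nnegrE ?mulr_ge0 ?le_max ?normr_ge0//.
rewrite powRM ?le_max ?normr_ge0//; apply: ler_wpM2l; first exact: powR_ge0.
by case: (leP `|a| `|b|) => _; rewrite ?lerDr ?lerDl powR_ge0.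
Qed.

Lemma lp_pow_tshift_le p v x : 0 <= p ->
  lp_pow p (tshift v x) <= 2 `^ p * (lp_pow p x + lp_pow p v).
Proof.
move=> p0; rewrite /lp_pow -big_split mulr_sumr; apply: ler_sum => i _.
by rewrite tnth_mktuple powR_normD_le.
Qed.

Lemma lp_pow_diff_tshift p v x :
  lp_pow p ([tuple tnth (tshift v x) i - tnth x i | i < d] : Rd R d) = lp_pow p v.
Proof. by apply: eq_bigr => i _; rewrite !tnth_mktuple addrAC subrr add0r. Qed.

Lemma lp_pow_diff_diag p x : p != 0 ->
  lp_pow p ([tuple tnth x i - tnth x i | i < d] : Rd R d) = 0.
Proof. by move=> p0; rewrite /lp_pow big1// => i _; rewrite tnth_mktuple subrr normr0 powR0. Qed.

Lemma lp_pow_tdelta p j t : p != 0 -> lp_pow p (tdelta j t) = `|t| `^ p.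
Proof.
move=> p0; rewrite /lp_pow (bigD1 j)//= big1 ?addr0; first by rewrite tnth_mktuple eqxx mulr1.
by move=> i /negbTE ij; rewrite tnth_mktuple ij mulr0 normr0 powR0.
Qed.

Lemma cvec_tshift v x : cvec (tshift v x) = cvec x + cvec v.
Proof. by apply/matrixP => i k; rewrite !mxE tnth_mktuple. Qed.

Lemma cvec_tdelta j t : cvec (tdelta j t) = t *: delta_mx j 0.
Proof. by apply/matrixP => i k; rewrite !mxE tnth_mktuple ord1 eqxx andbT. Qed.
End tuple_space.

Section euclid.
Context (R : realType) (d : nat).
Implicit Types (A B : 'cV[R]_d).

Lemma sqnorm2_ge0 A : 0 <= sqnorm2 A.
Proof. by apply: sumr_ge0 => i _; exact: sqr_ge0. Qed.

Lemma sqnorm2_gt0 A : A != 0 -> 0 < sqnorm2 A.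
Proof.
move=> A0; rewrite lt_def sqnorm2_ge0 andbT; apply: contra A0 => /eqP A2.
apply/eqP/matrixP => i k; rewrite ord1 mxE; apply/eqP; rewrite -sqrf_eq0.
by apply/eqP/(psumr_eq0P _ A2) => // l _; exact: sqr_ge0.
Qed.

Lemma sqnorm2Z (t : R) A : sqnorm2 (t *: A) = t ^+ 2 * sqnorm2 A.
Proof. by rewrite /sqnorm2 mulr_sumr; apply: eq_bigr => i _; rewrite mxE exprMn. Qed.

Lemma sqnorm2_halfD_le A B : sqnorm2 B / 2 <= sqnorm2 A + sqnorm2 (A + B).
Proof.
rewrite /sqnorm2 mulr_suml -big_split; apply: ler_sum => i _; rewrite mxE /=.
have := sqr_ge0 (2 * A i 0 + B i 0); nra.
Qed.

Lemma exists_col_compl_proj_neq0 r (X : 'M[R]_(d, r)) : (r < d)%N ->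
  exists j, col j (1%:M - X *m X^T) != 0.
Proof.
move=> rd; apply: contrapT => /forallNP col0.
have : (\rank (1%:M : 'M[R]_d) <= r)%N.
  have -> : 1%:M = X *m X^T.
    apply/eqP; rewrite -subr_eq0; apply/eqP/matrixP => i j.
    by have /negP := col0 j; rewrite negbK => /eqP/matrixP/(_ i 0); rewrite !mxE.
  exact: leq_trans (mxrankM_maxl _ _) (rank_leq_col X).
by rewrite mxrank1 leqNgt rd.
Qed.
End euclid.

Section wasserstein.
Context (R : realType) (d : nat).

Lemma Wasserstein_le_coupling (p s : R) (P1 P2 : probability (Rd R d) R)
    (Q : probability (Rd R d * Rd R d)%type R) :
  0 < p -> 0 <= s -> is_coupling P1 P2 Q ->
  (\int[Q]_z (lp_pow p ([tuple tnth z.1 i - tnth z.2 i | i < d] : Rd R d))%:E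
     <= (s `^ p)%:E)%E ->
  (Wasserstein p P1 P2 <= s%:E)%E.
Proof.
move=> p0 s0 cQ costQ; rewrite /Wasserstein; set S := [set _ | _].
have inf_ge0 : (0 <= ereal_inf S)%E.
  apply: le_ereal_inf_tmp => _ [Q' [_ ->]].
  by apply: integral_ge0 => z _; rewrite lee_fin lp_pow_ge0.
have inf_le : (ereal_inf S <= (s `^ p)%:E)%E.
  by apply: le_trans (ereal_inf_lbound _) costQ; exists Q.
apply: le_trans (gt0_ler_poweR _ _ _ inf_le) _.
- by rewrite invr_ge0 ltW.
- by rewrite in_itv /= inf_ge0 leey.
- by rewrite in_itv /= lee_fin powR_ge0 leey.
by rewrite poweR_EFin -powRrM mulfV ?gt_eqF// powRr1.
Qed.
End wasserstein.

Lemma integral_lp_pow_tshift_lty (R : realType) (d : nat) (P : probability (Rd R d) R)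
    (v : Rd R d) (p : R) :
  0 <= p -> in_Qp p P -> (\int[P]_x (lp_pow p (tshift v x))%:E < +oo)%E.
Proof.
move=> p0 Pp; have mlp := @measurable_lp_pow R d p.
apply: le_lt_trans (_ : \int[P]_x (2 `^ p * (lp_pow p x + lp_pow p v))%:E < +oo)%E.
  apply: ge0_le_integral => //.
  - by move=> x _; rewrite lee_fin lp_pow_ge0.
  - by apply/measurable_EFinP; exact: measurableT_comp mlp (measurable_tshift v).
  - apply/measurable_EFinP/measurable_funM; first exact: measurable_cst.
    exact: measurable_funD mlp (measurable_cst _).
  - by move=> x _; rewrite lee_fin lp_pow_tshift_le.
under eq_integral => x _ do rewrite EFinM EFinD.
have mlpE : measurable_fun [set: Rd R d] (fun x => (lp_pow p x)%:E).
  exact/measurable_EFinP.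
rewrite ge0_integralZl//; last 2 first.
- exact: emeasurable_funD mlpE (measurable_cst _).
- by move=> x _; rewrite -EFinD lee_fin addr_ge0 ?lp_pow_ge0.
rewrite ge0_integralD//; last 2 first.
- by move=> x _; rewrite lee_fin lp_pow_ge0.
- by move=> x _; rewrite lee_fin lp_pow_ge0.
rewrite integral_cst// [X in (_ + _ * X)%E]probability_setT mule1.
by rewrite lte_mul_pinfty ?lee_fin ?powR_ge0// lte_add_pinfty ?ltry.
Qed.

Section shift_mixture.
Context (R : realType) (d : nat) (P0 : probability (Rd R d) R) (v : Rd R d) (e : R).
Hypotheses (e0 : 0 <= e) (e1 : e <= 1).

Let mid := @measurable_id _ (Rd R d) setT.
Let msh := measurable_tshift v.

Definition shift_mixture := push_mixture P0 mid msh e0 e1.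

Definition shift_coupling :=
  push_mixture P0 (measurable_fun_pair mid mid) (measurable_fun_pair msh mid) e0 e1.

Lemma is_coupling_shift : is_coupling shift_mixture P0 shift_coupling.
Proof.
move=> A _; rewrite /= !push_mixtureE; split.
  by congr (_ * P0 _ + _ * P0 _)%E; apply/seteqP; split => x //= [].
rewrite (_ : _ @^-1` _ = A); last by apply/seteqP; split => x //= [].
rewrite (_ : _ @^-1` _ = A); last by apply/seteqP; split => x //= [].
by rewrite -ge0_muleDl ?lee_fin ?subr_ge0// -EFinD subrK mul1e.
Qed.

Lemma shift_coupling_cost p : p != 0 ->
  (\int[shift_coupling]_z (lp_pow p ([tuple tnth z.1 i - tnth z.2 i | i < d] : Rd R d))%:E
   = (e * lp_pow p v)%:E)%E.
Proof.
move=> p0; rewrite ge0_integral_push_mixture /=; last 2 first.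
- by apply/measurable_EFinP; exact: measurable_lp_pow_diff.
- by move=> z; rewrite lee_fin lp_pow_ge0.
under eq_integral => x _ do rewrite lp_pow_diff_diag//.
under [X in (_ + _ * X)%E]eq_integral => x _ do rewrite lp_pow_diff_tshift.
rewrite integral0 mule0 add0e integral_cst//.
by rewrite [X in (_ * (_ * X))%E]probability_setT mule1 -EFinM.
Qed.

Lemma in_Qp_shift_mixture p : 0 <= p -> in_Qp p P0 -> in_Qp p shift_mixture.
Proof.
move=> p0 P0p; rewrite /in_Qp ge0_integral_push_mixture /=; last 2 first.
- by apply/measurable_EFinP; exact: measurable_lp_pow.
- by move=> x; rewrite lee_fin lp_pow_ge0.
rewrite lte_add_pinfty// lte_mul_pinfty ?lee_fin ?subr_ge0//.
exact: integral_lp_pow_tshift_lty.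
Qed.

(* The pointwise bound holds whatever the mean [m] of the mixture is: a point
   and its shift cannot both be close to [m] in the seminorm of [M]. *)
Lemma pca_obj_shift_mixture_ge r (X : 'M[R]_(d, r)) : e <= 2^-1 ->
  ((e / 2 * sqnorm2 ((1%:M - X *m X^T) *m cvec v))%:E <= pca_obj X shift_mixture)%E.
Proof.
move=> e_half; rewrite /pca_obj; move: (mean _) => m.
set M := 1%:M - X *m X^T.
have mf := measurable_sqnorm2_affine M m.
have mfsh := measurableT_comp mf msh.
have f0 x : (0 <= (sqnorm2 (M *m (cvec x - m)))%:E)%E by rewrite lee_fin sqnorm2_ge0.
rewrite ge0_integral_push_mixture /=; [|exact/measurable_EFinP|by []].
set I1 := (\int[P0]_x _)%E; set I2 := (\int[P0]_x _)%E.
have mix_ge : (e%:E * I1 <= (1 - e)%:E * I1)%E.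
  by apply: lee_wpmul2r; [exact: integral_ge0 | rewrite lee_fin; lra].
apply: le_trans (leeD2r _ mix_ge).
rewrite -ge0_muleDr ?integral_ge0// /I1 /I2 -ge0_integralD//; last 2 first.
- exact/measurable_EFinP.
- exact/measurable_EFinP.
apply: le_trans (_ : e%:E * \int[P0]_x (sqnorm2 (M *m cvec v) / 2)%:E <= _)%E.
  rewrite integral_cst// [X in (_ * (_ * X))%E]probability_setT mule1 -EFinM lee_fin.
  by rewrite (mulrC (e / 2)) [leRHS]mulrCA.
apply: lee_wpmul2l; first by rewrite lee_fin.
apply: ge0_le_integral => //.
- by move=> x _; rewrite lee_fin divr_ge0 ?sqnorm2_ge0.
- by apply: emeasurable_funD; exact/measurable_EFinP.
- move=> x _; rewrite -EFinD lee_fin cvec_tshift addrAC.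
  by rewrite [M *m (_ + cvec v)]mulmxDr sqnorm2_halfD_le.
Qed.
End shift_mixture.

Lemma exists_scale_powR (R : realType) (p a b : R) : 1 <= p -> p < 2 -> 0 < a ->
  exists t, [/\ 0 < t, 2 * a <= t `^ p & b <= a * t ^+ 2 / t `^ p].
Proof.
move=> p1 p2 a0; pose K := Num.max 1 (Num.max (2 * a) (b / a)).
have K1 : 1 <= K by rewrite le_max lexx.
have q1 : 1 <= (2 - p)^-1 by rewrite invf_ge1 ?subr_gt0//; lra.
pose t := K `^ (2 - p)^-1.
have Kt : K <= t := le1r_powR K1 q1.
have t1 : 1 <= t := le_trans K1 Kt.
have t0 : 0 < t := lt_le_trans ltr01 t1.
have tK : t ^+ 2 / t `^ p = K.
  rewrite -(powR_mulrn 2 (ltW t0)) -powRB ?(gt_eqF t0) ?implybT//.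
  by rewrite -powRrM mulVf ?powRr1 ?(le_trans ler01 K1)// subr_eq0 gt_eqF.
exists t; split => //.
  apply: le_trans (le1r_powR t1 p1); apply: le_trans Kt.
  by rewrite !le_max lexx orbT.
rewrite -mulrA tK -ler_pdivrMl//; apply: le_trans (_ : b / a <= K).
  by rewrite mulrC.
by rewrite !le_max lexx !orbT.
Qed.

Theorem mainTheorem2 (R : realType) (d r : nat) (hr1 : (1 <= r)%N) (hrd : (r < d)%N)
    (p rho : R) (hp1 : 1 <= p) (hp2 : p < 2) (hrho : 0 < rho)
    (P0 : probability (Rd R d) R) (hP0 : in_Qp p P0)
    (X : 'M[R]_(d, r)) (hX : X^T *m X = 1%:M) :
  varphi p rho P0 X = +oo%E.
Proof.
have p0 : 0 < p := lt_le_trans ltr01 hp1.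
have pn0 : p != 0 := lt0r_neq0 p0.
have [j colj] := exists_col_compl_proj_neq0 X hrd.
have c0 := sqnorm2_gt0 colj; set c := sqnorm2 _ in c0.
apply/eqyP => B B0.
have rho_p0 : 0 < rho `^ p by rewrite powR_gt0.
have [t [t0 tp_ge tB]] := exists_scale_powR (2 * B / c) hp1 hp2 rho_p0.
have tp0 : 0 < t `^ p by rewrite powR_gt0.
pose e := rho `^ p / t `^ p.
have e0 : 0 <= e by rewrite divr_ge0 ?ltW.
have e_half : e <= 2^-1 by rewrite ler_pdivrMr//; lra.
have e1 : e <= 1 by lra.
pose v := tdelta j t.
have obj_ge := pca_obj_shift_mixture_ge P0 v e0 e1 X e_half.
apply: le_trans (le_trans _ obj_ge) _.
  rewrite lee_fin cvec_tdelta -scalemxAr -colE sqnorm2Z -/c.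
  have -> : e / 2 * (t ^+ 2 * c) = rho `^ p * t ^+ 2 / t `^ p * c / 2 by rewrite /e; ring.
  rewrite ler_pdivrMr// in tB; rewrite ler_pdivlMr//; lra.
apply: ereal_sup_ubound; exists (shift_mixture P0 v e0 e1); split => //.
  exact: in_Qp_shift_mixture (ltW p0) hP0.
apply: Wasserstein_le_coupling p0 (ltW hrho) (is_coupling_shift P0 v e0 e1) _.
rewrite shift_coupling_cost// lp_pow_tdelta// (ger0_norm (ltW t0)).
by rewrite /e divfK ?gt_eqF.
Qed.
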